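(* Let $T>0$, let $(\pi_n)$ be a sequence of regular partitions of $[0,T]$ ($t^n_k=kT/N_n$, $(N_n)$ strictly increasing), and let $X=\{X(t)\colon t\in[0,T]\}$ be a second order process satisfying (C1) for some $\gamma\in(0,1)$. Assume there exist $\varphi\in\Psi$ and a continuous bounded function $g_0\colon(0,T)\to\mathbb R$ such that $$\lim_{h\to0+}\sup_{\varphi(h)\le t\le T-h}\Big|\frac{\mathbb{E}(X_{t+h}-2X_t+X_{t-h})^2}{h^{2\gamma}}-g_0(t)\Big|=0.$$ Then $\mathbb{E}V^{(2)}_{N_n}(X,2)\to\int_0^Tg_0(t)\,dt$ as $n\to\infty$, where $V^{(2)}_{N_n}(X,2)=(T^{-1}N_n)^{2\gamma-1}\sum_{k=1}^{N_n-1}\big(X(t^n_{k+1})-2X(t^n_k)+X(t^n_{k-1})\big)^2$.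
   Context: $\sigma_X^2(s,t)=\mathbb{E}[X(t)-X(s)]^2$. (C1): $\sigma_X(0,\delta)=O(\delta^\gamma)$ as $\delta\downarrow0$. $\Psi$ is the class of continuous $\varphi\colon(0,T]\to[0,\infty)$ with $\varphi(h)\to0$, $L(h):=\varphi(h)/h\to\infty$, $hL(h)^3\to0$ as $h\downarrow0$. *)

From Stdlib Require Import Reals Lra List.
Open Scope R_scope.

(* A second order process X on [0,T] is represented by its covariance
   kernel K s t = E[X(s) X(t)], which is symmetric and positive semidefinite
   on [0,T].  All second moments of finite linear combinations of X are
   determined by K. *)
Definition cov_kernel (T : R) (K : R -> R -> R) : Prop :=
  (forall s t, K s t = K t s) /\
  (forall (n : nat) (a t : nat -> R),
     (forall i, (i <= n)%nat -> 0 <= t i <= T) ->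
     0 <= sum_f_R0 (fun i => sum_f_R0 (fun j => a i * a j * K (t i) (t j)) n) n).

(* sigma_X^2(s,t) = E[X(t) - X(s)]^2 *)
Definition sigma2 (K : R -> R -> R) (s t : R) : R :=
  K t t - 2 * K s t + K s s.

(* E (X(a) - 2 X(b) + X(c))^2 *)
Definition D2 (K : R -> R -> R) (a b c : R) : R :=
  K a a + 4 * K b b + K c c - 4 * K a b - 4 * K b c + 2 * K a c.

Definition cond_C1 (T : R) (K : R -> R -> R) (gamma : R) : Prop :=
  exists C delta0, 0 < C /\ 0 < delta0 /\
    forall delta, 0 < delta < delta0 -> delta <= T ->
      sqrt (sigma2 K 0 delta) <= C * Rpower delta gamma.

Definition in_Psi (T : R) (phi : R -> R) : Prop :=
  (forall h, 0 < h <= T -> limit1_in phi (fun x => 0 < x <= T) (phi h) h) /\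
  (forall h, 0 < h <= T -> 0 <= phi h) /\
  limit1_in phi (fun x => 0 < x <= T) 0 0 /\
  (forall M, exists delta, 0 < delta /\
     forall h, 0 < h < delta -> h <= T -> phi h / h > M) /\
  limit1_in (fun h => h * (phi h / h) ^ 3) (fun x => 0 < x <= T) 0 0.

Definition tpt (T : R) (N k : nat) : R := INR k * T / INR N.

Definition EV2 (T : R) (K : R -> R -> R) (gamma : R) (N : nat) : R :=
  Rpower (INR N / T) (2 * gamma - 1) *
  fold_right Rplus 0
    (map (fun k => D2 K (tpt T N (S k)) (tpt T N k) (tpt T N (pred k)))
         (seq 1 (N - 1))).

(* With h = T/N and t_k = k h, the normalisation turns E V^(2)_N into the sum
   over 1 <= k <= N-1 of h * D2(t_k) / h^(2 gamma), where D2(t) = E(X(t+h) -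
   2X(t) + X(t-h))^2.  We compare it term by term with the left Riemann sum
   of g0 on the same grid:
   - for t_k >= phi(h) the hypothesis on g0 makes each term eta-close;
   - in the boundary layer t_k < phi(h), positive semidefiniteness of the
     covariance and (C1) give D2 <= 16 C^2 (phi(h)+h)^(2 gamma), and the whole
     layer then costs at most 64 C^2 h L(h)^3 + B phi(h), which vanishes
     since phi is in Psi. *)

From Stdlib Require Import Reals Lra List.
Open Scope R_scope.
From Stdlib Require Import Lia.
From Coquelicot Require Import Coquelicot.

Section Kernel.
Variables (T : R) (K : R -> R -> R).
Hypothesis HK : cov_kernel T K.

Lemma cov_quadratic3 x y z a b c :
  0 <= x <= T -> 0 <= y <= T -> 0 <= z <= T ->
  0 <= a*a*K x x + b*b*K y y + c*c*K z z
       + 2*a*b*K x y + 2*a*c*K x z + 2*b*c*K y z.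
Proof.
  intros Hx Hy Hz. destruct HK as [Hsym Hpsd].
  pose (av := fun i : nat => match i with 0%nat => a | 1%nat => b | _ => c end).
  pose (tv := fun i : nat => match i with 0%nat => x | 1%nat => y | _ => z end).
  assert (Htv : forall i, (i <= 2)%nat -> 0 <= tv i <= T)
    by (intros [|[|i]] _; simpl; assumption).
  pose proof (Hpsd 2%nat av tv Htv) as H; simpl in H.
  rewrite (Hsym y x), (Hsym z x), (Hsym z y) in H. lra.
Qed.

Lemma sigma2_nonneg s t : 0 <= s <= T -> 0 <= t <= T -> 0 <= sigma2 K s t.
Proof.
  intros Hs Ht. pose proof (cov_quadratic3 s t t 1 (-1) 0 Hs Ht Ht) as H.
  unfold sigma2. lra.
Qed.

Lemma D2_nonneg a b c :
  0 <= a <= T -> 0 <= b <= T -> 0 <= c <= T -> 0 <= D2 K a b c.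
Proof.
  intros Ha Hb Hc. pose proof (cov_quadratic3 a b c 1 (-2) 1 Ha Hb Hc) as H.
  unfold D2. lra.
Qed.

(* (u + v)^2 <= 2u^2 + 2v^2 applied to the two increments of a second difference. *)
Lemma D2_le_increments a b c :
  0 <= a <= T -> 0 <= b <= T -> 0 <= c <= T ->
  D2 K a b c <= 2 * sigma2 K b a + 2 * sigma2 K c b.
Proof.
  intros Ha Hb Hc. pose proof (cov_quadratic3 a b c 1 0 (-1) Ha Hb Hc) as H.
  unfold D2, sigma2. rewrite (proj1 HK b a), (proj1 HK c b). lra.
Qed.

(* Same inequality for an increment, split through the origin. *)
Lemma sigma2_le_origin s t :
  0 <= s <= T -> 0 <= t <= T ->
  sigma2 K s t <= 2 * sigma2 K 0 s + 2 * sigma2 K 0 t.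
Proof.
  intros Hs Ht. assert (H0 : 0 <= 0 <= T) by lra.
  pose proof (cov_quadratic3 0 s t (-2) 1 1 H0 Hs Ht) as H.
  unfold sigma2. lra.
Qed.

Lemma D2_le_origin u M a b c :
  u <= T -> (forall x, 0 <= x <= u -> sigma2 K 0 x <= M) ->
  0 <= a <= u -> 0 <= b <= u -> 0 <= c <= u -> D2 K a b c <= 16 * M.
Proof.
  intros HuT HM Ha Hb Hc.
  pose proof (D2_le_increments a b c ltac:(lra) ltac:(lra) ltac:(lra)).
  pose proof (sigma2_le_origin b a ltac:(lra) ltac:(lra)).
  pose proof (sigma2_le_origin c b ltac:(lra) ltac:(lra)).
  pose proof (HM a Ha). pose proof (HM b Hb). pose proof (HM c Hc). lra.
Qed.

Lemma sigma2_origin_le gamma C delta0 u :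
  0 < gamma ->
  (forall delta, 0 < delta < delta0 -> delta <= T ->
      sqrt (sigma2 K 0 delta) <= C * Rpower delta gamma) ->
  0 < u < delta0 -> u <= T ->
  forall x, 0 <= x <= u -> sigma2 K 0 x <= C * C * Rpower u (2 * gamma).
Proof.
  intros Hg HC Hu HuT x Hx.
  assert (HC2 : 0 <= C * C) by nra.
  assert (Hp : 0 < Rpower u (2 * gamma)) by apply exp_pos.
  destruct (Req_dec x 0) as [->|Hx0].
  { unfold sigma2. nra. }
  pose proof (sigma2_nonneg 0 x ltac:(lra) ltac:(lra)) as Hs.
  pose proof (HC x ltac:(lra) ltac:(lra)) as Hsq.
  pose proof (sqrt_pos (sigma2 K 0 x)) as Hrt.
  rewrite <- (sqrt_sqrt _ Hs).
  apply Rle_trans with (C * C * (Rpower x gamma * Rpower x gamma)); [nra|].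
  apply Rmult_le_compat_l; [exact HC2|].
  replace (Rpower x gamma * Rpower x gamma) with (Rpower x (2 * gamma))
    by (rewrite <- Rpower_plus; f_equal; ring).
  apply Rle_Rpower_l; lra.
Qed.

End Kernel.

Definition sum1 (f : nat -> R) (n : nat) : R := fold_right Rplus 0 (map f (seq 1 n)).

Lemma sum1_0 f : sum1 f 0 = 0.
Proof. reflexivity. Qed.

Lemma sum1_S f n : sum1 f (S n) = sum1 f n + f (S n).
Proof.
  unfold sum1. rewrite seq_S, map_app, fold_right_app. simpl.
  induction (map f (seq 1 n)); simpl; lra.
Qed.

Lemma sum1_le f g n :
  (forall k, (1 <= k <= n)%nat -> f k <= g k) -> sum1 f n <= sum1 g n.
Proof.
  induction n as [|n IH]; intros H; [rewrite !sum1_0; lra|].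
  rewrite !sum1_S. pose proof (H (S n) ltac:(lia)).
  assert (sum1 f n <= sum1 g n) by (apply IH; intros; apply H; lia). lra.
Qed.

Lemma sum1_ext f g n :
  (forall k, (1 <= k <= n)%nat -> f k = g k) -> sum1 f n = sum1 g n.
Proof.
  intros H. apply Rle_antisym; apply sum1_le; intros k Hk; rewrite (H k Hk); lra.
Qed.

Lemma sum1_plus f g n : sum1 (fun k => f k + g k) n = sum1 f n + sum1 g n.
Proof. induction n; [rewrite !sum1_0; lra | rewrite !sum1_S, IHn; lra]. Qed.

Lemma sum1_minus f g n : sum1 (fun k => f k - g k) n = sum1 f n - sum1 g n.
Proof. induction n; [rewrite !sum1_0; lra | rewrite !sum1_S, IHn; lra]. Qed.

Lemma sum1_scal c f n : sum1 (fun k => c * f k) n = c * sum1 f n.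
Proof. induction n; [rewrite !sum1_0; lra | rewrite !sum1_S, IHn; lra]. Qed.

Lemma sum1_const c n : sum1 (fun _ => c) n = INR n * c.
Proof.
  induction n; [rewrite sum1_0; simpl; lra | rewrite sum1_S, IHn, S_INR; lra].
Qed.

Lemma sum1_abs f n : Rabs (sum1 f n) <= sum1 (fun k => Rabs (f k)) n.
Proof.
  induction n; [rewrite !sum1_0, Rabs_R0; lra|].
  rewrite !sum1_S. eapply Rle_trans; [apply Rabs_triang | lra].
Qed.

Lemma sum_f_R0_sum1 f n : sum_f_R0 f n = f 0%nat + sum1 f n.
Proof.
  induction n; [simpl; rewrite sum1_0; lra|].
  rewrite sum1_S. simpl. rewrite IHn. lra.
Qed.

Lemma sum1_indicator_le (h c : R) n : 0 < h -> 0 <= c ->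
  sum1 (fun k => if Rlt_dec (INR k * h) c then h else 0) n <= Rmin (INR n * h) c.
Proof.
  intros Hh Hc. induction n; [rewrite sum1_0; simpl; apply Rmin_glb; lra|].
  pose proof (Rmin_l (INR n * h) c). pose proof (Rmin_r (INR n * h) c).
  rewrite sum1_S, S_INR in *.
  destruct (Rlt_dec ((INR n + 1) * h) c); apply Rmin_glb; lra.
Qed.

Lemma Rpower_mesh (T N g : R) : 0 < T -> 0 < N ->
  Rpower (N / T) (2 * g - 1) = (T / N) / Rpower (T / N) (2 * g).
Proof.
  intros HT HN. assert (Hh : 0 < T / N) by (apply Rdiv_lt_0_compat; lra).
  unfold Rpower. replace (N / T) with (/ (T / N)) by (field; lra).
  rewrite ln_Rinv by exact Hh.
  replace ((2 * g - 1) * - ln (T / N)) with (ln (T / N) + - (2 * g * ln (T / N))) by ring.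
  rewrite exp_plus, exp_ln, exp_Ropp by exact Hh. reflexivity.
Qed.

Lemma EV2_as_sum T K gamma N : (1 <= N)%nat -> 0 < T ->
  EV2 T K gamma N =
  sum1 (fun k => T / INR N *
    (D2 K (tpt T N k + T / INR N) (tpt T N k) (tpt T N k - T / INR N)
       / Rpower (T / INR N) (2 * gamma))) (N - 1).
Proof.
  intros HN HT. assert (HNr : 0 < INR N) by (apply lt_0_INR; lia).
  unfold EV2. change (fold_right Rplus 0 (map ?f (seq 1 (N - 1)))) with (sum1 f (N - 1)).
  rewrite Rpower_mesh, <- sum1_scal by lra. apply sum1_ext.
  intros k Hk. unfold tpt. rewrite S_INR.
  replace (INR (pred k)) with (INR k - 1)
    by (replace k with (S (pred k)) at 1 by lia; rewrite S_INR; ring).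
  replace ((INR k + 1) * T / INR N) with (INR k * T / INR N + T / INR N) by (field; lra).
  replace ((INR k - 1) * T / INR N) with (INR k * T / INR N - T / INR N) by (field; lra).
  unfold Rdiv. ring.
Qed.

Definition left_sum (g : R -> R) (T : R) (N : nat) : R :=
  sum_f_R0 (fun k => T / INR N * g (tpt T N k)) (pred N).

Definition mesh_limit (T : R) (u : nat -> R) (l : R) : Prop :=
  forall eps, 0 < eps -> exists rho, 0 < rho /\
    forall M, (1 <= M)%nat -> T / INR M < rho -> Rabs (u M - l) < eps.

Lemma mesh_limit_Un_cv T u l (N : nat -> nat) :
  0 < T -> (forall n, (N n < N (S n))%nat) ->
  mesh_limit T u l -> Un_cv (fun n => u (N n)) l.
Proof.
  intros HT HN Hu eps Heps.
  assert (HNn : forall n, (n <= N n)%nat)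
    by (intro n; induction n; [lia | specialize (HN n); lia]).
  destruct (Hu eps Heps) as [rho [Hrho Hclose]].
  destruct (archimed_cor1 (rho / T)) as [n0 [Hn0 Hn0p]];
    [apply Rdiv_lt_0_compat; lra|].
  exists n0. intros n Hn. apply Hclose; [specialize (HNn n); lia|].
  assert (HMr : INR n0 <= INR (N n)) by (apply le_INR; specialize (HNn n); lia).
  assert (Hn0r : 0 < INR n0) by (apply lt_0_INR; lia).
  apply Rle_lt_trans with (T / INR n0).
  - unfold Rdiv. apply Rmult_le_compat_l; [lra|]. apply Rinv_le_contravar; lra.
  - apply (Rmult_lt_reg_r (/ T)); [apply Rinv_0_lt_compat; lra|].
    replace (T / INR n0 * / T) with (/ INR n0) by (field; lra). exact Hn0.
Qed.

Lemma mkseq_S (g : nat -> R) m :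
  seq.mkseq g (S m) = g 0%nat :: seq.mkseq (fun i => g (S i)) m.
Proof.
  unfold seq.mkseq. simpl. f_equal.
  generalize 0%nat. induction m; intros a; simpl; [reflexivity | f_equal; apply IHm].
Qed.

Lemma Riemann_sum_left_points (f : R -> R) n : forall g : nat -> R,
  Riemann_sum f (SF_seq_f2 (fun x _ => x) (seq.mkseq g (S (S n))))
  = sum_f_R0 (fun i => (g (S i) - g i) * f (g i)) n.
Proof.
  induction n; intros g.
  - rewrite !mkseq_S. unfold Riemann_sum. simpl.
    change (scal ?x ?y) with (x * y). change (plus ?x ?y) with (x + y).
    change (@zero R_ModuleSpace) with 0. ring.
  - rewrite mkseq_S, SF_cons_f2 by (rewrite seq.size_mkseq; lia).
    rewrite Riemann_sum_cons, IHn. simpl.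
    change (scal ?x ?y) with (x * y). change (plus ?x ?y) with (x + y).
    exact (eq_sym (decomp_sum (fun i => (g (S i) - g i) * f (g i)) (S n) (Nat.lt_0_succ n))).
Qed.

Lemma left_sum_mesh_limit g T (pr : Riemann_integrable g 0 T) :
  0 < T -> mesh_limit T (left_sum g T) (RiemannInt pr).
Proof.
  intros HT eps Heps.
  pose proof (ex_RInt_Reals_aux_1 g 0 T pr) as H.
  unfold is_RInt, filterlim, filter_le, filtermap in H.
  specialize (H (ball (RiemannInt pr) (mkposreal eps Heps)) (locally_ball _ _)).
  destruct H as [d Hd].
  exists d. split; [apply cond_pos|]. intros M HM Hmesh.
  assert (HMr : 0 < INR M) by (apply lt_0_INR; lia).
  assert (HI : INR (pred M) + 1 = INR M)
    by (replace M with (S (pred M)) at 2 by lia; rewrite S_INR; ring).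
  destruct (Riemann_fine_unif_part (fun x _ => x) 0 T (pred M)) as [Hs [Hp [Hh Hl]]];
    [intros; lra | lra|].
  specialize (Hd (SF_seq_f2 (fun x _ => x) (unif_part 0 T (pred M)))).
  rewrite Rmin_left, Rmax_right in Hd by lra.
  assert (Hfine : seq_step (SF_lx (SF_seq_f2 (fun x _ : R => x) (unif_part 0 T (pred M)))) < d)
    by (eapply Rle_lt_trans; [apply Hs | rewrite HI, Rminus_0_r; exact Hmesh]).
  specialize (Hd Hfine (conj Hp (conj Hh Hl))).
  change (Rabs (scal (sign (T - 0)) (Riemann_sum g
    (SF_seq_f2 (fun x _ : R => x) (unif_part 0 T (pred M)))) - RiemannInt pr) < eps) in Hd.
  rewrite sign_eq_1 in Hd by lra. change (scal 1 ?x) with (1 * x) in Hd.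
  rewrite Rmult_1_l in Hd. unfold unif_part in Hd.
  rewrite Riemann_sum_left_points, HI in Hd.
  unfold left_sum. erewrite sum_eq; [exact Hd|].
  intros k _. unfold tpt. rewrite S_INR. f_equal; [field | f_equal; field]; lra.
Qed.

Lemma integrable_of_approx f a b : a <= b ->
  (forall eps : posreal, {g : R -> R & {pr : Riemann_integrable g a b &
     {psi : StepFun a b | (forall t, a <= t <= b -> Rabs (f t - g t) <= psi t)
                             /\ Rabs (RiemannInt_SF psi) < eps}}}) ->
  Riemann_integrable f a b.
Proof.
  intros Hab Happrox eps.
  assert (He2 : 0 < eps / 2) by (destruct eps; simpl; lra).
  destruct (Happrox (mkposreal _ He2)) as [g [pr [psi [Hfg Hpsi]]]].
  destruct (pr (mkposreal _ He2)) as [phi1 [psi1 [Hg Hpsi1]]].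
  exists phi1, (mkStepFun (StepFun_P28 1 psi1 psi)). split.
  - intros t Ht. rewrite Rmin_left, Rmax_right in Ht, Hg by lra. simpl.
    specialize (Hfg t Ht). specialize (Hg t Ht).
    replace (f t - phi1 t) with ((f t - g t) + (g t - phi1 t)) by ring.
    eapply Rle_trans; [apply Rabs_triang | lra].
  - rewrite StepFun_P30. simpl in *.
    eapply Rle_lt_trans; [apply Rabs_triang | rewrite Rmult_1_l; lra].
Qed.

(* Projection of R onto [e, T - e]; it is 1-Lipschitz, hence continuous. *)
Definition clamp (e T x : R) : R := Rmin (Rmax x e) (T - e).

Lemma clamp_range e T x : e <= T - e -> e <= clamp e T x <= T - e.
Proof. intros. unfold clamp, Rmin, Rmax. repeat destruct Rle_dec; lra. Qed.

Lemma clamp_id e T x : e <= x <= T - e -> clamp e T x = x.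
Proof. intros. unfold clamp, Rmin, Rmax. repeat destruct Rle_dec; lra. Qed.

Lemma clamp_continuous e T x : e <= T - e -> continuity_pt (clamp e T) x.
Proof.
  intros He eps Heps. exists eps. split; [lra|]. intros y [_ Hy]. simpl in *.
  unfold R_dist in *. eapply Rle_lt_trans; [|exact Hy].
  unfold clamp, Rmin, Rmax.
  repeat destruct Rle_dec; unfold Rabs; repeat destruct Rcase_abs; lra.
Qed.

Definition edge_strips (T B e x : R) : R :=
  if Rle_dec x e then 2 * B else if Rle_dec (T - e) x then 2 * B else 0.

Lemma edge_strips_step T B e : 0 < e -> e < T - e -> IsStepFun (edge_strips T B e) 0 T.
Proof.
  intros He HeT. exists (0 :: e :: (T - e) :: T :: nil)%list.
  exists (2 * B :: 0 :: 2 * B :: nil)%list.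
  unfold adapted_couple. simpl. repeat split.
  - intros [|[|[|i]]]; simpl; intros; try lra; lia.
  - rewrite Rmin_left; lra.
  - rewrite Rmax_right; lra.
  - intros [|[|[|i]]]; simpl; intros Hi x Hx; unfold open_interval in Hx;
      unfold edge_strips; repeat destruct Rle_dec; try lra; lia.
Defined.

(* A bounded function continuous on (0,T) is Riemann integrable on [0,T]:
   it agrees with the continuous function g o clamp off two strips of width e. *)
Lemma integrable_bounded_continuous_interior g T B : 0 < T -> 0 <= B ->
  (forall t, 0 <= t <= T -> Rabs (g t) <= B) ->
  (forall t, 0 < t < T -> continuity_pt g t) -> Riemann_integrable g 0 T.
Proof.
  intros HT HB Hb Hc. apply integrable_of_approx; [lra|]. intros eps.
  set (e := Rmin (T / 4) (eps / (8 * (B + 1)))).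
  assert (Heps : 0 < eps) by apply cond_pos.
  assert (He : 0 < e)
    by (apply Rmin_pos; [lra | apply Rdiv_lt_0_compat; lra]).
  assert (HeT : e <= T / 4) by apply Rmin_l.
  assert (Heeps : e <= eps / (8 * (B + 1))) by apply Rmin_r.
  exists (fun x => g (clamp e T x)).
  unshelve eexists.
  { apply continuity_implies_RiemannInt; [lra|]. intros x _.
    apply continuity_pt_comp; [apply clamp_continuous; lra|].
    apply Hc. pose proof (clamp_range e T x). lra. }
  exists (mkStepFun (edge_strips_step T B e He ltac:(lra))). split.
  - intros t Ht. simpl. pose proof (clamp_range e T t ltac:(lra)).
    pose proof (Hb t Ht). pose proof (Hb (clamp e T t) ltac:(lra)).
    pose proof (Rabs_triang (g t) (- g (clamp e T t))). rewrite Rabs_Ropp in *.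
    unfold edge_strips. destruct (Rle_dec t e); [|destruct (Rle_dec (T - e) t)].
    1, 2: unfold Rminus; lra.
    rewrite clamp_id, Rminus_diag, Rabs_R0 by lra. lra.
  - unfold RiemannInt_SF. destruct Rle_dec; [|lra]. simpl.
    rewrite Rabs_right by nra.
    assert (HBe : B * e <= B * (eps / (8 * (B + 1)))) by (apply Rmult_le_compat_l; lra).
    assert (B * (eps / (8 * (B + 1))) <= eps / 8).
    { apply (Rmult_le_reg_r (B + 1)); [lra|].
      replace (B * (eps / (8 * (B + 1))) * (B + 1)) with (B * (eps / 8)) by (field; lra).
      nra. }
    nra.
Qed.

(* In the boundary layer t < phi(h) the crude bound D2 <= 16 C^2 (phi(h)+h)^(2 gamma)
   costs at most 64 C^2 h L(h)^3 after multiplying by the layer width phi(h). *)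
Lemma boundary_layer_bound C h ph g : 0 < h -> h <= ph -> 0 < g < 1 ->
  16 * (C * C * Rpower (ph + h) (2 * g)) / Rpower h (2 * g) * ph
    <= 64 * (C * C) * (h * (ph / h) ^ 3).
Proof.
  intros Hh Hph Hg.
  set (L := ph / h).
  assert (HL : 1 <= L)
    by (unfold L; apply (Rmult_le_reg_r h); [lra | unfold Rdiv; rewrite Rmult_assoc, Rinv_l; lra]).
  assert (Hph' : ph = L * h) by (unfold L; field; lra).
  rewrite Hph'. replace (L * h + h) with ((L + 1) * h) by ring.
  rewrite <- Rpower_mult_distr by lra.
  assert (HP : 0 < Rpower h (2 * g)) by apply exp_pos.
  replace (16 * (C * C * (Rpower (L + 1) (2 * g) * Rpower h (2 * g))) / Rpower h (2 * g) * (L * h))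
    with (16 * (C * C) * Rpower (L + 1) (2 * g) * (L * h)) by (field; lra).
  assert (HR : Rpower (L + 1) (2 * g) <= (L + 1) ^ 2)
    by (rewrite <- Rpower_pow by lra; apply Rle_Rpower; simpl; lra).
  assert (HC : 0 <= C * C) by nra.
  apply Rle_trans with (16 * (C * C) * (4 * L ^ 2) * (L * h)); [|right; ring].
  apply Rmult_le_compat_r; [nra|]. apply Rmult_le_compat_l; nra.
Qed.

Section Gap.
Variables (T : R) (K : R -> R -> R) (gamma C delta0 B : R) (g0 : R -> R).
Hypotheses (HT : 0 < T) (HK : cov_kernel T K) (Hg : 0 < gamma < 1)
  (HC : forall delta, 0 < delta < delta0 -> delta <= T ->
          sqrt (sigma2 K 0 delta) <= C * Rpower delta gamma)
  (HB : 0 <= B) (Hb : forall t, 0 <= t <= T -> Rabs (g0 t) <= B).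

(* One mesh size h = T/N, a boundary layer [0, phih), and the precision eta
   of the hypothesis on D2 / h^(2 gamma) outside the layer. *)
Variables (N : nat) (phih eta : R).
Let h := T / INR N.
Let P := Rpower h (2 * gamma).
(* Bound for |D2 / P - g0| inside the boundary layer. *)
Let Q := 16 * (C * C * Rpower (phih + h) (2 * gamma)) / P + B.
Hypotheses (HN : (1 <= N)%nat) (Hph : h <= phih)
  (Hlayer_small : phih + h < delta0) (Hlayer_T : phih + h <= T)
  (Hlim : forall t, phih <= t <= T - h -> Rabs (D2 K (t + h) t (t - h) / P - g0 t) <= eta).

Lemma mesh_pos : 0 < h.
Proof. apply Rdiv_lt_0_compat; [lra | apply lt_0_INR; lia]. Qed.

Lemma tpt_mesh k : tpt T N k = INR k * h.
Proof.
  assert (0 < INR N) by (apply lt_0_INR; lia). unfold tpt, h. field. lra.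
Qed.

Lemma normalised_D2_error t : h <= t <= T - h ->
  Rabs (D2 K (t + h) t (t - h) / P - g0 t) <= if Rlt_dec t phih then Q else eta.
Proof.
  intros Ht. pose proof mesh_pos as Hh.
  destruct (Rlt_dec t phih) as [Hin|Hout]; [|apply Hlim; lra].
  assert (HP : 0 < P) by apply exp_pos.
  assert (Hsig := sigma2_origin_le T K HK gamma C delta0 (phih + h)
                    ltac:(lra) HC ltac:(lra) Hlayer_T).
  assert (HD0 : 0 <= D2 K (t + h) t (t - h))
    by (apply (D2_nonneg T K HK); lra).
  assert (HD : D2 K (t + h) t (t - h) <= 16 * (C * C * Rpower (phih + h) (2 * gamma)))
    by (apply (D2_le_origin T K HK (phih + h)); try lra; exact Hsig).
  assert (HDP : D2 K (t + h) t (t - h) / P <= 16 * (C * C * Rpower (phih + h) (2 * gamma)) / P)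
    by (apply Rmult_le_compat_r; [left; apply Rinv_0_lt_compat |]; assumption).
  assert (HDP0 : 0 <= D2 K (t + h) t (t - h) / P)
    by (apply Rmult_le_pos; [| left; apply Rinv_0_lt_compat]; assumption).
  pose proof (Hb t ltac:(lra)).
  unfold Q. eapply Rle_trans; [apply Rabs_triang|].
  rewrite Rabs_Ropp, Rabs_right by lra. lra.
Qed.

Lemma eta_nonneg : 0 <= eta.
Proof.
  pose proof mesh_pos.
  pose proof (Hlim (T - h) ltac:(lra)).
  pose proof (Rabs_pos (D2 K (T - h + h) (T - h) (T - h - h) / P - g0 (T - h))). lra.
Qed.

Lemma Q_nonneg : 0 <= Q.
Proof.
  assert (0 < P) by apply exp_pos.
  assert (0 < Rpower (phih + h) (2 * gamma)) by apply exp_pos.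
  assert (0 <= C * C) by nra.
  unfold Q, Rdiv. apply Rplus_le_le_0_compat; [|exact HB].
  apply Rmult_le_pos; [apply Rmult_le_pos; [lra | apply Rmult_le_pos; lra] |].
  left; apply Rinv_0_lt_compat; assumption.
Qed.

(* Summing normalised_D2_error over the interior grid points: the cells
   outside the layer contribute at most T eta, those inside at most Q phih. *)
Lemma interior_sum_error :
  Rabs (sum1 (fun k => h * (D2 K (tpt T N k + h) (tpt T N k) (tpt T N k - h) / P)
                       - h * g0 (tpt T N k)) (N - 1))
    <= T * eta + Q * phih.
Proof.
  pose proof mesh_pos as Hh. pose proof eta_nonneg. pose proof Q_nonneg.
  assert (HNh : INR N * h = T) by (unfold h; field; apply not_0_INR; lia).
  set (layer := fun k => if Rlt_dec (INR k * h) phih then h else 0).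
  eapply Rle_trans; [apply sum1_abs|].
  eapply Rle_trans with (sum1 (fun k => h * eta + layer k * Q) (N - 1)).
  { apply sum1_le. intros k Hk. rewrite tpt_mesh.
    assert (1 <= INR k) by (apply (le_INR 1); lia).
    assert (INR k + 1 <= INR N) by (rewrite <- S_INR; apply le_INR; lia).
    rewrite <- Rmult_minus_distr_l, Rabs_mult, (Rabs_right h) by lra.
    pose proof (normalised_D2_error (INR k * h) ltac:(nra)) as Herr.
    unfold layer. destruct Rlt_dec; nra. }
  rewrite sum1_plus, sum1_const.
  replace (sum1 (fun k => layer k * Q) (N - 1)) with (Q * sum1 layer (N - 1))
    by (rewrite <- sum1_scal; apply sum1_ext; intros; ring).
  pose proof (sum1_indicator_le h phih (N - 1) Hh ltac:(lra)) as Hind.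
  change (sum1 layer (N - 1) <= Rmin (INR (N - 1) * h) phih) in Hind.
  pose proof (Rmin_r (INR (N - 1) * h) phih).
  assert (INR (N - 1) <= INR N) by (apply le_INR; lia).
  assert (INR (N - 1) * (h * eta) <= T * eta).
  { rewrite <- HNh, <- !Rmult_assoc.
    apply Rmult_le_compat_r; [lra | apply Rmult_le_compat_r; lra]. }
  assert (Q * sum1 layer (N - 1) <= Q * phih) by (apply Rmult_le_compat_l; lra).
  lra.
Qed.

(* The main estimate: EV2 differs from the left Riemann sum of g0 by at most
   the interior error (with the layer cost bounded by boundary_layer_bound)
   and the Riemann term k = 0 (at most h B). *)
Lemma EV2_left_sum_gap :
  Rabs (EV2 T K gamma N - left_sum g0 T N)
    <= T * eta + 64 * (C * C) * (h * (phih / h) ^ 3) + B * phih + h * B.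
Proof.
  pose proof mesh_pos as Hh.
  rewrite EV2_as_sum by (assumption || lra). unfold left_sum.
  rewrite sum_f_R0_sum1. replace (pred N) with (N - 1)%nat by lia.
  fold h. fold P.
  rewrite (Rplus_comm (h * g0 (tpt T N 0))), Rminus_plus_distr, <- sum1_minus.
  pose proof interior_sum_error as Hsum.
  assert (Hlayer : Q * phih <= 64 * (C * C) * (h * (phih / h) ^ 3) + B * phih).
  { pose proof (boundary_layer_bound C h phih gamma Hh Hph Hg).
    replace (Q * phih)
      with (16 * (C * C * Rpower (phih + h) (2 * gamma)) / P * phih + B * phih)
      by (unfold Q; ring).
    unfold P. lra. }
  assert (Hedge : Rabs (h * g0 (tpt T N 0)) <= h * B).
  { rewrite Rabs_mult, Rabs_right by lra. apply Rmult_le_compat_l; [lra|].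
    apply Hb. rewrite tpt_mesh. simpl. lra. }
  eapply Rle_trans; [apply Rabs_triang|]. rewrite Rabs_Ropp. lra.
Qed.
End Gap.

Definition eventually_small (P : R -> Prop) : Prop :=
  exists rho, 0 < rho /\ forall h, 0 < h < rho -> P h.

Lemma eventually_small_and (P Q : R -> Prop) :
  eventually_small P -> eventually_small Q -> eventually_small (fun h => P h /\ Q h).
Proof.
  intros [r1 [Hr1 HP]] [r2 [Hr2 HQ]]. exists (Rmin r1 r2). split; [apply Rmin_pos; lra|].
  intros h Hh. pose proof (Rmin_l r1 r2). pose proof (Rmin_r r1 r2).
  split; [apply HP | apply HQ]; lra.
Qed.

Lemma eventually_small_lt c : 0 < c -> eventually_small (fun h => h < c).
Proof. intros Hc. exists c. split; [lra | intros h Hh; lra]. Qed.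

Lemma eventually_small_limit f T l : 0 < T ->
  limit1_in f (fun x => 0 < x <= T) l 0 ->
  forall e, 0 < e -> eventually_small (fun h => Rabs (f h - l) < e).
Proof.
  intros HT Hf e He. destruct (Hf e He) as [alp [Halp Hclose]].
  exists (Rmin alp T). split; [apply Rmin_pos; lra|]. intros h Hh.
  pose proof (Rmin_l alp T). pose proof (Rmin_r alp T).
  apply (Hclose h). simpl. unfold R_dist. rewrite Rminus_0_r, Rabs_right; lra.
Qed.

Lemma mul_le_of_le_div a x e : 0 <= a -> 0 <= x -> x <= e / (a + 1) -> a * x <= e.
Proof.
  intros Ha Hx Hxe. apply Rle_trans with ((a + 1) * x); [nra|].
  apply Rle_trans with ((a + 1) * (e / (a + 1))); [apply Rmult_le_compat_l; lra|].
  right. field. lra.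
Qed.

Lemma Psi_small_mesh T phi w a : 0 < T -> in_Psi T phi -> 0 < w -> 0 < a ->
  eventually_small (fun h =>
    h <= phi h /\ phi h < w /\ h * (phi h / h) ^ 3 < a /\ h < w).
Proof.
  intros HT [_ [_ [Hphi0 [HL Hcube]]]] Hw Ha.
  assert (Hwide : eventually_small (fun h => h <= T -> phi h / h > 1)).
  { destruct (HL 1) as [d [Hd Hwide]]. exists d. split; [exact Hd | exact Hwide]. }
  destruct (eventually_small_and _ _ Hwide (eventually_small_and _ _
     (eventually_small_limit phi T 0 HT Hphi0 w Hw) (eventually_small_and _ _
     (eventually_small_limit _ T 0 HT Hcube a Ha) (eventually_small_and _ _
     (eventually_small_lt w Hw) (eventually_small_lt T HT)))))
    as [rho [Hrho Hsmall]].
  exists rho. split; [exact Hrho|]. intros h Hh.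
  destruct (Hsmall h Hh) as [Hwide_h [Hthin_h [Hcube_h [Hhw HhT]]]].
  cbv beta in Hcube_h. rewrite Rminus_0_r in Hthin_h, Hcube_h.
  apply Rabs_def2 in Hthin_h.
  assert (Hph : h <= phi h).
  { specialize (Hwide_h ltac:(lra)). apply Rgt_lt in Hwide_h.
    apply (Rmult_lt_compat_r h) in Hwide_h; [|lra].
    replace (phi h / h * h) with (phi h) in Hwide_h by (field; lra). lra. }
  repeat split; try lra. apply Rle_lt_trans with (1 := Rle_abs _). exact Hcube_h.
Qed.

Lemma EV2_left_sum_gap_vanishes T K gamma C delta0 phi g0 B :
  0 < T -> cov_kernel T K -> 0 < gamma < 1 -> 0 < delta0 ->
  (forall delta, 0 < delta < delta0 -> delta <= T ->
     sqrt (sigma2 K 0 delta) <= C * Rpower delta gamma) ->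
  in_Psi T phi ->
  0 <= B -> (forall t, 0 <= t <= T -> Rabs (g0 t) <= B) ->
  (forall eps, 0 < eps -> exists delta, 0 < delta /\
     forall h, 0 < h < delta -> forall t, phi h <= t <= T - h ->
       Rabs (D2 K (t + h) t (t - h) / Rpower h (2 * gamma) - g0 t) <= eps) ->
  mesh_limit T (fun M => EV2 T K gamma M - left_sum g0 T M) 0.
Proof.
  intros HT HK Hg Hd0 HC Hphi HB Hb Hlim eps Heps.
  set (e := eps / 5).
  set (width := Rmin (e / (B + 1)) (Rmin (delta0 / 2) (T / 2))).
  assert (He : 0 < e) by (unfold e; lra).
  assert (Hw : 0 < width)
    by (apply Rmin_pos; [apply Rdiv_lt_0_compat | apply Rmin_pos]; lra).
  assert (Hw1 : width <= e / (B + 1)) by apply Rmin_l.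
  assert (Hw2 : width <= delta0 / 2) by (eapply Rle_trans; [apply Rmin_r | apply Rmin_l]).
  assert (Hw3 : width <= T / 2) by (eapply Rle_trans; [apply Rmin_r | apply Rmin_r]).
  assert (Hreg : eventually_small (fun h => forall t, phi h <= t <= T - h ->
            Rabs (D2 K (t + h) t (t - h) / Rpower h (2 * gamma) - g0 t) <= e / T)).
  { destruct (Hlim (e / T) ltac:(apply Rdiv_lt_0_compat; lra)) as [d [Hd Hreg]].
    exists d. split; [exact Hd | exact Hreg]. }
  destruct (eventually_small_and _ _ Hreg (Psi_small_mesh T phi width
     (e / (64 * (C * C) + 1)) HT Hphi Hw ltac:(apply Rdiv_lt_0_compat; nra)))
    as [rho [Hrho Hsmall]].
  exists rho. split; [exact Hrho|]. intros M HM Hmesh.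
  assert (HMr : 0 < INR M) by (apply lt_0_INR; lia).
  assert (Hh : 0 < T / INR M) by (apply Rdiv_lt_0_compat; lra).
  destruct (Hsmall (T / INR M) (conj Hh Hmesh))
    as [Hreg_h [Hph [Hthin_h [Hcube_h Hh_w]]]].
  pose proof (EV2_left_sum_gap T K gamma C delta0 B g0 HT HK Hg HC HB Hb M
    (phi (T / INR M)) (e / T) HM Hph ltac:(lra) ltac:(lra) Hreg_h) as Hgap.
  assert (E1 : T * (e / T) = e) by (field; lra).
  assert (E2 : 64 * (C * C) * (T / INR M * (phi (T / INR M) / (T / INR M)) ^ 3) <= e).
  { apply mul_le_of_le_div; [nra | | lra].
    apply Rmult_le_pos; [lra|]. apply pow_le, Rmult_le_pos; [lra|].
    left; apply Rinv_0_lt_compat; lra. }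
  assert (E3 : B * phi (T / INR M) <= e) by (apply mul_le_of_le_div; lra).
  assert (E4 : T / INR M * B <= e) by (rewrite Rmult_comm; apply mul_le_of_le_div; lra).
  rewrite Rminus_0_r. unfold e in *. lra.
Qed.

Lemma mesh_limit_of_gap T u v l :
  mesh_limit T u l -> mesh_limit T (fun M => v M - u M) 0 -> mesh_limit T v l.
Proof.
  intros Hu Hgap eps Heps.
  destruct (Hu (eps / 2) ltac:(lra)) as [r1 [Hr1 H1]].
  destruct (Hgap (eps / 2) ltac:(lra)) as [r2 [Hr2 H2]].
  exists (Rmin r1 r2). split; [apply Rmin_pos; lra|]. intros M HM Hmesh.
  pose proof (Rmin_l r1 r2). pose proof (Rmin_r r1 r2).
  specialize (H1 M HM ltac:(lra)). specialize (H2 M HM ltac:(lra)).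
  rewrite Rminus_0_r in H2.
  replace (v M - l) with ((v M - u M) + (u M - l)) by ring.
  eapply Rle_lt_trans; [apply Rabs_triang | lra].
Qed.

Lemma bound_closed_interval (g : R -> R) T :
  (exists B, forall t, 0 < t < T -> Rabs (g t) <= B) ->
  exists B, 0 <= B /\ forall t, 0 <= t <= T -> Rabs (g t) <= B.
Proof.
  intros [B0 HB0]. exists (Rmax (Rmax B0 (Rabs (g 0))) (Rabs (g T))).
  pose proof (Rmax_l (Rmax B0 (Rabs (g 0))) (Rabs (g T))).
  pose proof (Rmax_r (Rmax B0 (Rabs (g 0))) (Rabs (g T))).
  pose proof (Rmax_l B0 (Rabs (g 0))). pose proof (Rmax_r B0 (Rabs (g 0))).
  pose proof (Rabs_pos (g T)). split; [lra|]. intros t Ht.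
  destruct (Req_dec t 0) as [->|Ht0]; [lra|].
  destruct (Req_dec t T) as [->|HtT]; [lra|].
  pose proof (HB0 t ltac:(lra)). lra.
Qed.

Lemma continuity_pt_interior (g : R -> R) T t :
  0 < t < T -> limit1_in g (fun x => 0 < x < T) (g t) t -> continuity_pt g t.
Proof.
  intros Ht Hg eps Heps. destruct (Hg eps Heps) as [alp [Halp Hclose]].
  exists (Rmin alp (Rmin t (T - t))).
  split; [apply Rmin_pos; [lra | apply Rmin_pos; lra]|].
  intros x [_ Hx]. apply Hclose. simpl in *. unfold R_dist in *.
  pose proof (Rmin_l alp (Rmin t (T - t))). pose proof (Rmin_r alp (Rmin t (T - t))).
  pose proof (Rmin_l t (T - t)). pose proof (Rmin_r t (T - t)).
  apply Rabs_def2 in Hx. split; [lra | apply Rabs_def1; lra].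
Qed.

Theorem proposition2
  (T : R) (HT : 0 < T)
  (N : nat -> nat) (HN : forall n, (N n < N (S n))%nat)
  (K : R -> R -> R) (HK : cov_kernel T K)
  (gamma : R) (Hg : 0 < gamma < 1) (HC1 : cond_C1 T K gamma)
  (phi : R -> R) (Hphi : in_Psi T phi)
  (g0 : R -> R)
  (Hg0c : forall t, 0 < t < T -> limit1_in g0 (fun x => 0 < x < T) (g0 t) t)
  (Hg0b : exists B, forall t, 0 < t < T -> Rabs (g0 t) <= B)
  (Hlim : forall eps, 0 < eps -> exists delta, 0 < delta /\
     forall h, 0 < h < delta -> forall t, phi h <= t <= T - h ->
       Rabs (D2 K (t + h) t (t - h) / Rpower h (2 * gamma) - g0 t) <= eps) :
  exists pr : Riemann_integrable g0 0 T,
    Un_cv (fun n => EV2 T K gamma (N n)) (RiemannInt pr).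
Proof.
  destruct HC1 as [C [delta0 [_ [Hd0 HC]]]].
  destruct (bound_closed_interval g0 T Hg0b) as [B [HB Hb]].
  assert (pr : Riemann_integrable g0 0 T).
  { apply (integrable_bounded_continuous_interior g0 T B HT HB Hb).
    intros t Ht. exact (continuity_pt_interior g0 T t Ht (Hg0c t Ht)). }
  exists pr. apply (mesh_limit_Un_cv T _ _ N HT HN).
  apply (mesh_limit_of_gap T (left_sum g0 T)).
  - exact (left_sum_mesh_limit g0 T pr HT).
  - exact (EV2_left_sum_gap_vanishes T K gamma C delta0 phi g0 B
             HT HK Hg Hd0 HC Hphi HB Hb Hlim).
Qed.
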